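(* In a minimally non-perfectly divisible graph $G$, every vertex belongs to a clique of size $\omega(G)$.
   Context: All graphs are finite and simple. For $S\subseteq V(G)$, $G[S]$ is the subgraph induced by $S$. $\omega(G)$ is the number of vertices in a largest clique of $G$ and $\chi(G)$ the chromatic number. A graph $G$ is perfect if $\chi(H)=\omega(H)$ for every induced subgraph $H$ of $G$. A partition $(A,B)$ of $V(G)$ is good if $G[A]$ is perfect and $\omega(G[B])<\omega(G)$. A graph $G$ is perfectly divisible if every induced subgraph $H$ of $G$ with at least one edge admits a good partition (of $V(H)$). A graph is minimally non-perfectly divisible if it is not perfectly divisible but each of its proper induced subgraphs is perfectly divisible. *)

From mathcomp Require Import all_boot.
Set Implicit Arguments. Unset Strict Implicit. Unset Printing Implicit Defensive.

(* Induced subgraphs are given by vertex sets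
   S : {set T}; G[S] is the graph on S with the adjacency e. *)
Section Graph.
Variables (T : finType) (e : rel T).

Definition simple_graph : Prop := symmetric e /\ irreflexive e.

Definition clique_in (S K : {set T}) : bool :=
  (K \subset S) && [forall x in K, forall y in K, (x != y) ==> e x y].

Definition omega (S : {set T}) : nat :=
  \max_(K : {set T} | clique_in S K) #|K|.

Definition proper_col (S : {set T}) (f : {ffun T -> 'I_#|T|}) : bool :=
  [forall x in S, forall y in S, e x y ==> (f x != f y)].

(* chi(G[S]) : least number of colours used by a proper colouring of G[S]
   (colours drawn from 'I_#|T|, which always suffices). *)
Definition chi (S : {set T}) : nat :=
  \big[minn/#|T|]_(f : {ffun T -> 'I_#|T|} | proper_col S f) #|f @: S|.

Definition perfect (S : {set T}) : Prop :=
  forall H : {set T}, H \subset S -> chi H = omega H.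

Definition good_partition (S A B : {set T}) : Prop :=
  A :|: B = S /\ A :&: B = set0 /\ perfect A /\ omega B < omega S.

Definition has_edge (S : {set T}) : Prop :=
  exists x y, [/\ x \in S, y \in S & e x y].

Definition perfectly_divisible (S : {set T}) : Prop :=
  forall H : {set T}, H \subset S -> has_edge H ->
    exists A B : {set T}, good_partition H A B.

Definition minimally_non_pd : Prop :=
  ~ perfectly_divisible [set: T] /\
  forall S : {set T}, S \proper [set: T] -> perfectly_divisible S.

End Graph.

From mathcomp Require Import all_boot.

Set Implicit Arguments. Unset Strict Implicit. Unset Printing Implicit Defensive.

(* Suppose v lies in no maximum clique of G.  Then G - v has an edge (a
   maximum clique avoids v and has at least two vertices), so by minimality it
   has a good partition (A, B).  Every clique of G[B + v] either contains v, and
   is then smaller than omega(G), or lies in B, and is then smaller than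
   omega(G - v) <= omega(G).  Hence (A, B + v) is a good partition of G, and as
   every proper induced subgraph is perfectly divisible, so is G:
   a contradiction. *)

Section Cliques.
Variables (T : finType) (e : rel T).

Lemma clique_card_le_omega (S K : {set T}) : clique_in e S K -> #|K| <= omega e S.
Proof. exact: (@leq_bigmax_cond _ _ (fun K : {set T} => #|K|)). Qed.

Lemma omega_attained (S : {set T}) : exists2 K, clique_in e S K & #|K| = omega e S.
Proof.
have clique0 : clique_in e S set0.
  by rewrite /clique_in sub0set; apply/forall_inP => x; rewrite inE.
have cliques_gt0 : 0 < #|[pred K : {set T} | clique_in e S K]|.
  by apply/card_gt0P; exists set0.
have [K cK sizeK] := @eq_bigmax_cond _ _ (fun K : {set T} => #|K|) cliques_gt0.
by exists K.
Qed.

Lemma clique_in_sub (S S' K : {set T}) :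
  K \subset S' -> clique_in e S K -> clique_in e S' K.
Proof. by move=> sKS' /andP[_ adjK]; rewrite /clique_in sKS'. Qed.

Lemma omega_sub (S S' : {set T}) : S \subset S' -> omega e S <= omega e S'.
Proof.
move=> sSS'; have [K cK <-] := omega_attained S; have [sKS _] := andP cK.
by apply/clique_card_le_omega/(clique_in_sub _ cK)/(subset_trans sKS).
Qed.

Lemma clique_in_adj (S K : {set T}) (x y : T) :
  clique_in e S K -> x \in K -> y \in K -> x != y -> e x y.
Proof.
by case/andP=> _ /forall_inP adjK xK yK; move/forall_inP: (adjK x xK) => /(_ y yK)/implyP.
Qed.

Lemma clique_has_edge (S K : {set T}) : clique_in e S K -> 1 < #|K| -> has_edge e S.
Proof.
move=> cK /card_gt1P[x [y [xK yK xy]]]; have /andP[sKS _] := cK.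
exists x, y; split; [exact: (subsetP sKS) | exact: (subsetP sKS) |].
exact: clique_in_adj cK xK yK xy.
Qed.

Lemma has_edge_omega_gt1 (S : {set T}) :
  simple_graph e -> has_edge e S -> 1 < omega e S.
Proof.
move=> [e_sym e_irr] [x [y [xS yS exy]]].
have xy : x != y by apply: contraTneq exy => ->; rewrite e_irr.
have cxy : clique_in e S [set x; y].
  rewrite /clique_in subUset !sub1set xS yS /=.
  apply/forall_inP => a aK; apply/forall_inP => b bK; apply/implyP.
  by move: aK bK; rewrite !inE => /orP[]/eqP-> /orP[]/eqP->; rewrite ?eqxx // e_sym.
by have := clique_card_le_omega cxy; rewrite cards2 xy.
Qed.

Lemma good_partition_setU1 (S A B : {set T}) (v : T) :
  v \in S -> (forall K, clique_in e S K -> v \in K -> #|K| < omega e S) ->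
  good_partition e (S :\ v) A B -> good_partition e S A (v |: B).
Proof.
move=> vS small_v [AB_cover [AB_disj [perfA omegaB_lt]]].
have [vA vB] : v \notin A /\ v \notin B.
  by apply/norP; rewrite -in_setU AB_cover setD11.
split; last split; last split=> //.
- by rewrite setUCA AB_cover setD1K.
- rewrite setIUr AB_disj setU0; apply/setP => x; rewrite !inE.
  by case: eqP => [->|_]; rewrite ?andbF ?(negbTE vA).
- have [K cK <-] := omega_attained (v |: B).
  have [sKvB _] := andP cK.
  have svBS : v |: B \subset S by rewrite -(setD1K vS) -AB_cover setUS ?subsetUr.
  have cK_S : clique_in e S K := clique_in_sub (subset_trans sKvB svBS) cK.
  have [vK | vK] := boolP (v \in K); first exact: small_v cK_S vK.
  have cK_B : clique_in e B K.
    by apply: clique_in_sub cK; rewrite -(setU1K vB) subsetD1 sKvB.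
  apply: leq_ltn_trans (clique_card_le_omega cK_B) _.
  exact: leq_trans omegaB_lt (omega_sub (subD1set S v)).
Qed.

End Cliques.

Theorem lemma2 (T : finType) (e : rel T) :
  simple_graph e -> minimally_non_pd e ->
  forall v : T, exists K : {set T},
    [/\ clique_in e [set: T] K, v \in K & #|K| = omega e [set: T]].
Proof.
move=> simple_e [not_pd min_pd] v.
have [/existsP[K /and3P[cK vK /eqP sizeK]] | /existsPn no_max] :=
  boolP [exists K, [&& clique_in e [set: T] K, v \in K & #|K| == omega e [set: T]]].
  by exists K.
have small_v K : clique_in e [set: T] K -> v \in K -> #|K| < omega e [set: T].
  move=> cK vK; rewrite ltn_neqAle clique_card_le_omega // andbT.
  by apply: contra (no_max K) => sizeK; rewrite cK vK.
exfalso; apply: not_pd => H _ edgeH.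
case: (eqVneq H [set: T]) edgeH => [-> edgeT | H_ne edgeH]; last first.
  by apply: (min_pd H); rewrite ?properT.
have [K cK sizeK] := omega_attained e [set: T].
have vK : v \notin K by apply/negP => /(small_v K cK); rewrite sizeK ltnn.
have edge_Tv : has_edge e ([set: T] :\ v).
  apply: (@clique_has_edge _ _ _ K); last by rewrite sizeK (has_edge_omega_gt1 simple_e edgeT).
  by apply: clique_in_sub cK; rewrite subsetD1 subsetT.
have Tv_proper : [set: T] :\ v \proper [set: T].
  by rewrite properT; apply/eqP => /setP/(_ v); rewrite setD11 inE.
have [A [B gpAB]] := min_pd _ Tv_proper _ (subxx _) edge_Tv.
by exists A, (v |: B); apply: good_partition_setU1.
Qed.
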